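(* Let $(H_q)_{q\ge0}$ be the Hermite polynomials, fix $u\in\mathbb R$ and $\gamma\in\mathbb R$. Then $$\sum_{q=1}^\infty \frac{H_q(u)^2}{q!\,q^{\gamma}}<\infty\quad\Longleftrightarrow\quad\gamma>\tfrac12.$$
   Context: Hermite polynomials are defined by $H_0(x)=1$, $H_1(x)=x$, $H_{q+1}(x)=xH_q(x)-qH_{q-1}(x)$. *)

From Stdlib Require Import Reals.
From Coquelicot Require Import Coquelicot.
Open Scope R_scope.

(* Hermite polynomials (probabilists'): H_0 = 1, H_1 = x,
   H_{q+1}(x) = x H_q(x) - q H_{q-1}(x). *)
Fixpoint hermite (n : nat) (x : R) : R :=
  match n with
  | O => 1
  | S m =>
      match m with
      | O => x
      | S k => x * hermite m x - INR m * hermite k x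
      end
  end.

From Stdlib Require Import Reals Factorial Lra Lia Psatz.
From Coquelicot Require Import Coquelicot.
Open Scope R_scope.

(* Write [a_k = H_k(u)^2 / k!] and [A_m = a_0 + ... + a_m]. The three-term recurrence gives the
   Turan-type identity [H_(m+1)^2 - H_m H_(m+2) = m! A_m], from which, by AM-GM,
   [|(m+1) (a_m + a_(m+1)) - A_m| <= (|u|/2) sqrt(m+1) (a_m + a_(m+1))]. Consequently the product
   [A_(m+1) A_(m+2)] exceeds [A_m A_(m+1)] by a factor [1 + 1/(m + O(sqrt m))], and comparing with
   [m +- K sqrt m] shows that these products are of exact order [m]. Hence [A_m] is of exact order
   [sqrt m] and [a_m + a_(m+1)] of exact order [m^(-1/2)], so the series behaves like
   [sum q^(-1/2-gamma)]. *)

Lemma ln_le_sub_1 y : 0 < y -> ln y <= y - 1.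
Proof. intro Hy. pose proof (exp_ineq1_le (ln y)) as H. rewrite exp_ln in H; lra. Qed.

Lemma ln_succ_sub_le N : 0 < N -> ln (N + 1) - ln N <= / N.
Proof.
  intro HN. rewrite <- ln_div by lra.
  pose proof (ln_le_sub_1 ((N + 1) / N) ltac:(apply Rdiv_lt_0_compat; lra)) as H.
  replace ((N + 1) / N - 1) with (/ N) in H by (field; lra). exact H.
Qed.

Lemma inv_succ_le_ln_succ_sub N : 0 < N -> / (N + 1) <= ln (N + 1) - ln N.
Proof.
  intro HN.
  pose proof (ln_le_sub_1 (N / (N + 1)) ltac:(apply Rdiv_lt_0_compat; lra)) as H.
  rewrite ln_div in H by lra.
  replace (N / (N + 1) - 1) with (- / (N + 1)) in H by (field; lra). lra.
Qed.

Lemma Rpower_opp_telescope q N : 0 < q -> 0 < N ->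
  q * Rpower (N + 1) (- (q + 1)) <= Rpower N (- q) - Rpower (N + 1) (- q).
Proof.
  intros Hq HN.
  assert (Hshift : Rpower N (- q) = Rpower (N + 1) (- q) * exp (q * (ln (N + 1) - ln N))).
  { unfold Rpower. rewrite <- exp_plus. f_equal. ring. }
  assert (Hpred : Rpower (N + 1) (- (q + 1)) = Rpower (N + 1) (- q) * / (N + 1)).
  { rewrite Ropp_plus_distr, Rpower_plus, (Rpower_Ropp (N + 1) 1), Rpower_1 by lra. reflexivity. }
  rewrite Hshift, Hpred.
  assert (q * / (N + 1) <= exp (q * (ln (N + 1) - ln N)) - 1).
  { pose proof (exp_ineq1_le (q * (ln (N + 1) - ln N))).
    pose proof (inv_succ_le_ln_succ_sub N HN). nra. }
  assert (0 < Rpower (N + 1) (- q)) by apply exp_pos.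
  nra.
Qed.

Lemma ex_series_of_bounded_partial_sums a M :
  (forall n, 0 <= a n) -> (forall n, sum_f_R0 a n <= M) -> ex_series a.
Proof.
  intros Ha HM. apply ex_series_Reals_1, growing_cv.
  - intro n. simpl. pose proof (Ha (S n)). lra.
  - exists M. intros x [n ->]. apply HM.
Qed.

Lemma partial_sums_bounded_of_ex_series a :
  (forall n, 0 <= a n) -> ex_series a -> exists M, forall n, sum_f_R0 a n <= M.
Proof.
  intros Ha Hex. destruct (ex_series_Reals_0 a Hex) as [l Hl].
  exists l. apply growing_ineq; [|exact Hl].
  intro n. simpl. pose proof (Ha (S n)). lra.
Qed.

Lemma ex_series_Rpower_opp p : 1 < p -> ex_series (fun n => Rpower (INR (S n)) (- p)).
Proof.
  intro Hp. set (q := p - 1). assert (Hq : 0 < q) by (unfold q; lra).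
  apply ex_series_of_bounded_partial_sums with (M := 1 + / q).
  { intro n. left. apply exp_pos. }
  (* Telescoping against n |-> (n + 1)^(-q) / q. *)
  assert (Hpartial : forall n, sum_f_R0 (fun k => Rpower (INR (S k)) (- p)) n
                               <= 1 + (1 - Rpower (INR (S n)) (- q)) / q).
  { induction n as [|n IH].
    - simpl. unfold Rpower. rewrite ln_1, !Rmult_0_r, exp_0. unfold Rdiv. lra.
    - rewrite tech5.
      pose proof (Rpower_opp_telescope q (INR (S n)) Hq ltac:(apply lt_0_INR; lia)) as T.
      rewrite <- S_INR in T. replace (q + 1) with p in T by (unfold q; ring).
      apply (Rmult_le_reg_l q); [exact Hq|].
      apply (Rmult_le_compat_l q) in IH; [|lra].
      replace (q * (1 + (1 - Rpower (INR (S (S n))) (- q)) / q))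
        with (q + 1 - Rpower (INR (S (S n))) (- q)) by (field; lra).
      replace (q * (1 + (1 - Rpower (INR (S n)) (- q)) / q))
        with (q + 1 - Rpower (INR (S n)) (- q)) in IH by (field; lra).
      lra. }
  intro n. eapply Rle_trans; [apply Hpartial|].
  assert (0 < Rpower (INR (S n)) (- q)) by apply exp_pos.
  assert (0 < / q) by (apply Rinv_0_lt_compat; lra).
  unfold Rdiv. nra.
Qed.

Lemma ln_le_harmonic n : ln (INR n + 2) <= sum_f_R0 (fun k => / INR (S k)) n.
Proof.
  induction n as [|n IH].
  - simpl. replace (0 + 2) with 2 by ring. pose proof (ln_le_sub_1 2). lra.
  - rewrite tech5, !S_INR.
    pose proof (ln_succ_sub_le (INR n + 2) ltac:(pose proof (pos_INR n); lra)).
    replace (INR n + 1 + 2) with (INR n + 2 + 1) by ring.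
    replace (INR n + 1 + 1) with (INR n + 2) by ring.
    lra.
Qed.

Lemma not_ex_series_harmonic_minorant c f M : 0 < c ->
  (forall n, (M <= n)%nat -> c / INR (S n) <= f n) -> ~ ex_series f.
Proof.
  intros Hc Hf Hex.
  apply (ex_series_incr_n f M) in Hex.
  set (c' := c / INR (S M)).
  assert (Hc' : 0 < c') by (apply Rdiv_lt_0_compat; [lra | apply lt_0_INR; lia]).
  (* (M + k + 1) <= (M + 1) (k + 1), so the shifted tail still dominates c' / (k + 1). *)
  assert (Hshift : forall k, c' * / INR (S k) <= f (M + k)%nat).
  { intro k. eapply Rle_trans; [|apply Hf; lia].
    unfold c', Rdiv. rewrite Rmult_assoc, <- Rinv_mult. apply Rmult_le_compat_l; [lra|].
    apply Rinv_le_contravar; [apply lt_0_INR; lia|].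
    rewrite <- mult_INR. apply le_INR. nia. }
  assert (Hpos : forall k, 0 <= f (M + k)%nat).
  { intro k. eapply Rle_trans; [|apply Hshift].
    apply Rmult_le_pos; [lra | left; apply Rinv_0_lt_compat, lt_0_INR; lia]. }
  destruct (partial_sums_bounded_of_ex_series _ Hpos Hex) as [B HB].
  destruct (INR_archimed 1 (exp (B / c'))) as [n Hn]; [lra|].
  assert (Hgrow : c' * ln (INR n + 2) <= B).
  { eapply Rle_trans; [|apply (HB n)].
    eapply Rle_trans; [apply Rmult_le_compat_l; [lra | apply ln_le_harmonic]|].
    rewrite scal_sum. apply sum_Rle. intros k _. rewrite Rmult_comm. apply Hshift. }
  assert (Hlarge : B / c' < ln (INR n + 2)).
  { rewrite <- (ln_exp (B / c')). apply ln_increasing; [apply exp_pos | lra]. }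
  apply (Rmult_lt_compat_l c') in Hlarge; [|lra].
  replace (c' * (B / c')) with B in Hlarge by (field; lra). lra.
Qed.

Lemma ex_series_eventually_le a b M :
  (forall n, (M <= n)%nat -> Rabs (a n) <= b n) -> ex_series b -> ex_series a.
Proof.
  intros Hab Hb.
  apply (ex_series_incr_n a M).
  apply (@ex_series_le R_AbsRing R_CompleteNormedModule _ (fun k => b (M + k)%nat)).
  - intro k. apply Hab. lia.
  - now apply (ex_series_incr_n b M).
Qed.

Lemma nondecreasing_from (r : nat -> R) M :
  (forall m, (M <= m)%nat -> r m <= r (S m)) -> forall m, (M <= m)%nat -> r M <= r m.
Proof.
  intros Hr m Hm. induction Hm as [|m Hm IH]; [lra|].
  eapply Rle_trans; [exact IH | now apply Hr].
Qed.

Lemma sqrt_INR_eventually_ge b : exists M, forall m, (M <= m)%nat -> b <= sqrt (INR (S m)).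
Proof.
  destruct (INR_archimed 1 (b ^ 2)) as [M HM]; [lra|].
  exists M. intros m Hm.
  apply le_INR in Hm. rewrite S_INR in *.
  apply Rle_trans with (Rabs b); [apply Rle_abs|].
  rewrite <- sqrt_Rsqr_abs. apply sqrt_le_1_alt. unfold Rsqr. lra.
Qed.

Lemma Rdiv_le_cross a b c d : 0 < b -> 0 < d -> a * d <= c * b -> a / b <= c / d.
Proof.
  intros Hb Hd Hcross.
  replace (a / b) with (a * d * / (b * d)) by (field; lra).
  replace (c / d) with (c * b * / (b * d)) by (field; lra).
  apply Rmult_le_compat_r; [left; apply Rinv_0_lt_compat; nra | exact Hcross].
Qed.

Lemma sqrt_INR_sqr n : sqrt (INR n) * sqrt (INR n) = INR n.
Proof. apply sqrt_sqrt, pos_INR. Qed.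

Lemma sqrt_INR_le_S n : sqrt (INR n) <= sqrt (INR (S n)).
Proof. apply sqrt_le_1_alt, le_INR. lia. Qed.

(* With [y^2 = x^2 + 1], [x |-> x^2 + (4e+1) x] grows by a factor at most [1 + 1/(x^2 + e x)]. *)
Lemma comparison_step_lower e x y : 0 <= e -> 2 * e + 1 <= x -> y * y = x * x + 1 -> x <= y ->
  (y * y + (4 * e + 1) * y) * (x * x + e * x)
  <= (x * x + (4 * e + 1) * x) * (x * x + e * x + 1).
Proof.
  intros He Hx Hy Hxy.
  set (K := 4 * e + 1). set (w := (y - x) * x).
  assert (HK : K = 4 * e + 1) by reflexivity. assert (Hw : w = (y - x) * x) by reflexivity.
  clearbody K w.
  assert (Hw_le : w <= 1 / 2) by (assert ((y - x) * (y + x) = 1) by nra; nra).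
  assert (Hw_ge : 0 <= w) by nra.
  assert (Hdiff : (x * x + K * x) * (x * x + e * x + 1) - (y * y + K * y) * (x * x + e * x)
                  = - K * w * (x + e) - e * x + K * x) by (rewrite Hw, Hy; ring).
  assert (0 <= (1 / 2 - w) * K * (x + e)) by (apply Rmult_le_pos; [apply Rmult_le_pos|]; lra).
  nra.
Qed.

(* With [y^2 = x^2 + 1], [x |-> x^2 - (2e+2) x] grows by a factor at least [1 + 1/(x^2 - e x - 1)]. *)
Lemma comparison_step_upper e x y : 0 <= e -> 2 * e + 3 <= x -> y * y = x * x + 1 -> x <= y ->
  (x * x - (2 * e + 2) * x) * (x * x - e * x)
  <= (y * y - (2 * e + 2) * y) * (x * x - e * x - 1).
Proof.
  intros He Hx Hy Hxy.
  set (K := 2 * e + 2). set (w := (y - x) * x).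
  assert (HK : K = 2 * e + 2) by reflexivity. assert (Hw : w = (y - x) * x) by reflexivity.
  clearbody K w.
  assert (Hw_le : w <= 1 / 2) by (assert ((y - x) * (y + x) = 1) by nra; nra).
  assert (Hdiff : (y * y - K * y) * (x * x - e * x - 1) - (x * x - K * x) * (x * x - e * x)
                  = (K - e) * x - 1 - K * (w * x - (y - x) * (e * x + 1))) by (rewrite Hw, Hy; ring).
  assert (0 <= K * (y - x) * (e * x + 1)) by (apply Rmult_le_pos; [apply Rmult_le_pos|]; nra).
  assert (0 <= K * (1 / 2 - w) * x) by (apply Rmult_le_pos; [apply Rmult_le_pos|]; lra).
  nra.
Qed.

Lemma INR_fact_pos k : 0 < INR (fact k).
Proof. apply lt_0_INR, lt_O_fact. Qed.

Section HermiteWeights.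

Variable u : R.

Definition hweight k := hermite k u ^ 2 / INR (fact k).
Definition hsum m := sum_f_R0 hweight m.
Definition hpair m := hweight m + hweight (S m).

Let e := Rabs u / 2.

Let e_ge0 : 0 <= e.
Proof. pose proof (Rabs_pos u). unfold e. lra. Qed.

Lemma hermite_SS k : hermite (S (S k)) u = u * hermite (S k) u - INR (S k) * hermite k u.
Proof. reflexivity. Qed.

Lemma hweight_ge0 k : 0 <= hweight k.
Proof. apply Rdiv_le_0_compat; [apply pow2_ge_0 | apply INR_fact_pos]. Qed.

Lemma hpair_ge0 m : 0 <= hpair m.
Proof. pose proof (hweight_ge0 m); pose proof (hweight_ge0 (S m)); unfold hpair; lra. Qed.

Lemma hsum_S m : hsum (S m) = hsum m + hweight (S m).
Proof. reflexivity. Qed.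

Lemma hsum_le_S m : hsum m <= hsum (S m).
Proof. rewrite hsum_S. pose proof (hweight_ge0 (S m)). lra. Qed.

Lemma hsum_ge1 m : 1 <= hsum m.
Proof.
  induction m as [|m IH].
  - unfold hsum, hweight. simpl. lra.
  - pose proof (hsum_le_S m). lra.
Qed.

Lemma hermite_turan m :
  hermite (S m) u ^ 2 - hermite m u * hermite (S (S m)) u = INR (fact m) * hsum m.
Proof.
  induction m as [|m IH].
  - unfold hsum, hweight. simpl. field.
  - rewrite hsum_S, Rmult_plus_distr_l.
    assert (Hlast : INR (fact (S m)) * hweight (S m) = hermite (S m) u ^ 2).
    { unfold hweight. field. apply Rgt_not_eq, INR_fact_pos. }
    rewrite Hlast. change (fact (S m)) with (S m * fact m)%nat.
    rewrite mult_INR, Rmult_assoc, <- IH, (hermite_SS (S m)), (hermite_SS m), (S_INR (S m)).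
    ring.
Qed.

(* By [hermite_turan], [(m+1) hpair m - hsum m = u H_m H_(m+1) / m!], whose square is
   [u^2 (m+1) X Y] for the two summands [X], [Y] of [hpair m]; AM-GM bounds [X Y] by [hpair m^2 / 4]. *)
Lemma hsum_deviation_sqr m :
  (INR (S m) * hpair m - hsum m) ^ 2 <= u ^ 2 / 4 * INR (S m) * hpair m ^ 2.
Proof.
  pose proof (hermite_turan m) as T. rewrite hermite_SS in T.
  pose proof (INR_fact_pos m) as HF.
  assert (HN : 0 < INR (S m)) by (apply lt_0_INR; lia).
  set (F := INR (fact m)) in *. set (N := INR (S m)) in *.
  set (h0 := hermite m u) in *. set (h1 := hermite (S m) u) in *.
  set (X := h0 ^ 2 / F). set (Y := h1 ^ 2 / (N * F)).
  assert (Hpair : hpair m = X + Y).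
  { unfold hpair, hweight, X, Y. change (fact (S m)) with (S m * fact m)%nat.
    rewrite mult_INR. reflexivity. }
  assert (Hsum : hsum m = (h1 ^ 2 - u * h0 * h1 + N * h0 ^ 2) / F).
  { apply (Rmult_eq_reg_l F); [|lra]. rewrite <- T. unfold N. field. lra. }
  assert (Hdev : N * hpair m - hsum m = u * h0 * h1 / F).
  { rewrite Hpair, Hsum. unfold X, Y. field. lra. }
  assert (Hsqr : (u * h0 * h1 / F) ^ 2 = u ^ 2 * N * X * Y) by (unfold X, Y; field; lra).
  rewrite Hdev, Hsqr, Hpair.
  clearbody X Y.
  assert (0 <= u ^ 2 * N * (X - Y) ^ 2)
    by (apply Rmult_le_pos; [apply Rmult_le_pos; [apply pow2_ge_0 | lra] | apply pow2_ge_0]).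
  lra.
Qed.

Lemma hsum_between m :
  (INR (S m) - e * sqrt (INR (S m))) * hpair m <= hsum m
  <= (INR (S m) + e * sqrt (INR (S m))) * hpair m.
Proof.
  pose proof (hsum_deviation_sqr m) as Hdev. pose proof (hpair_ge0 m) as Hs.
  set (N := INR (S m)) in *. set (x := sqrt N).
  assert (HN : 0 <= N) by apply pos_INR.
  assert (Hx : x * x = N) by (apply sqrt_sqrt; lra).
  assert (Hx0 : 0 <= x) by apply sqrt_pos.
  assert (He0 : 0 <= Rabs u) by apply Rabs_pos.
  assert (He : Rabs u ^ 2 = u ^ 2) by apply pow2_abs.
  set (r := Rabs u / 2 * x * hpair m).
  assert (Hr : 0 <= r) by (apply Rmult_le_pos; [apply Rmult_le_pos|]; lra).
  assert ((N * hpair m - hsum m) ^ 2 <= r ^ 2).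
  { replace (r ^ 2) with (Rabs u ^ 2 / 4 * (x * x) * hpair m ^ 2) by (unfold r; field).
    rewrite He, Hx. exact Hdev. }
  unfold e, r in *. split; nra.
Qed.

Definition hprod m := hsum m * hsum (S m).

Lemma hprod_ge1 m : 1 <= hprod m.
Proof. pose proof (hsum_ge1 m); pose proof (hsum_ge1 (S m)); unfold hprod; nra. Qed.

Lemma hprod_S m : hprod (S m) = hprod m + hsum (S m) * hpair (S m).
Proof. unfold hprod, hpair. rewrite (hsum_S (S m)), (hsum_S m). ring. Qed.

Lemma hprod_step_lower m (D := INR (S (S m)) + e * sqrt (INR (S (S m)))) :
  (D + 1) * hprod m <= D * hprod (S m).
Proof.
  destruct (hsum_between (S m)) as [_ Hle]. fold D in Hle.
  rewrite hprod_S. unfold hprod.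
  pose proof (hsum_ge1 m). pose proof (hsum_le_S m).
  assert (hsum m * hsum (S m) <= hsum (S m) * hsum (S m)) by nra.
  assert (hsum (S m) * hsum (S m) <= hsum (S m) * (D * hpair (S m))) by nra.
  nra.
Qed.

Lemma hprod_step_upper m (D := INR (S (S m)) - e * sqrt (INR (S (S m)))) :
  (D - 1) * hprod (S m) <= D * hprod m.
Proof.
  destruct (hsum_between (S m)) as [Hge _]. fold D in Hge.
  rewrite hprod_S. unfold hprod.
  pose proof (hsum_ge1 m). pose proof (hsum_le_S m). pose proof (hsum_le_S (S m)).
  assert (Hnext : hsum (S (S m)) = hsum m + hpair (S m)).
  { unfold hpair. rewrite !hsum_S. ring. }
  assert (hsum (S m) * (D * hpair (S m)) <= hsum (S m) * hsum (S m)) by nra.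
  nra.
Qed.

Definition hslow m := INR (S (S m)) + (4 * e + 1) * sqrt (INR (S (S m))).
Definition hfast m := INR (S (S m)) - (2 * e + 2) * sqrt (INR (S (S m))).

Lemma hslow_ge m : INR (S (S m)) <= hslow m.
Proof. pose proof (sqrt_pos (INR (S (S m)))). unfold hslow. nra. Qed.

Lemma hslow_gt0 m : 0 < hslow m.
Proof. eapply Rlt_le_trans; [|apply hslow_ge]. apply lt_0_INR. lia. Qed.

Lemma hfast_le m : hfast m <= INR (S (S m)).
Proof. pose proof (sqrt_pos (INR (S (S m)))). unfold hfast. nra. Qed.

Lemma hfast_gt0 m : 2 * e + 3 <= sqrt (INR (S (S m))) -> 0 < hfast m.
Proof. intro Hx. pose proof (sqrt_INR_sqr (S (S m))). unfold hfast. nra. Qed.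

Lemma hprod_div_hslow_le_S m : 2 * e + 1 <= sqrt (INR (S (S m))) ->
  hprod m / hslow m <= hprod (S m) / hslow (S m).
Proof.
  intro Hx. apply Rdiv_le_cross; [apply hslow_gt0 | apply hslow_gt0|].
  pose proof (hprod_step_lower m) as Hstep. cbv zeta in Hstep.
  set (D := INR (S (S m)) + e * sqrt (INR (S (S m)))) in Hstep.
  assert (HD : 0 < D).
  { pose proof (sqrt_pos (INR (S (S m)))). pose proof (lt_0_INR (S (S m)) ltac:(lia)).
    unfold D. nra. }
  assert (Hcmp : hslow (S m) * D <= hslow m * (D + 1)).
  { unfold hslow, D.
    set (x := sqrt (INR (S (S m)))). set (y := sqrt (INR (S (S (S m))))).
    assert (Hxx : x * x = INR (S (S m))) by apply sqrt_INR_sqr.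
    assert (Hy : y * y = x * x + 1) by (rewrite Hxx; apply sqrt_INR_sqr).
    rewrite <- Hxx, <- (sqrt_INR_sqr (S (S (S m)))). fold y.
    apply comparison_step_lower; [exact e_ge0 | exact Hx | exact Hy | apply sqrt_INR_le_S]. }
  pose proof (hprod_ge1 m). pose proof (hslow_gt0 m).
  apply (Rmult_le_reg_r D); [exact HD|]. nra.
Qed.

Lemma hprod_div_hfast_le_S m : 2 * e + 3 <= sqrt (INR (S (S m))) ->
  hprod (S m) / hfast (S m) <= hprod m / hfast m.
Proof.
  intro Hx. pose proof (sqrt_INR_le_S (S (S m))) as Hxy.
  pose proof (hfast_gt0 m Hx). pose proof (hfast_gt0 (S m) ltac:(lra)).
  apply Rdiv_le_cross; [lra | lra|].
  pose proof (hprod_step_upper m) as Hstep. cbv zeta in Hstep.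
  set (D := INR (S (S m)) - e * sqrt (INR (S (S m)))) in Hstep.
  assert (HD : 1 < D) by (pose proof (sqrt_INR_sqr (S (S m))); pose proof e_ge0; unfold D; nra).
  assert (Hcmp : hfast m * D <= hfast (S m) * (D - 1)).
  { unfold hfast, D.
    set (x := sqrt (INR (S (S m)))) in *. set (y := sqrt (INR (S (S (S m))))) in *.
    assert (Hxx : x * x = INR (S (S m))) by apply sqrt_INR_sqr.
    assert (Hy : y * y = x * x + 1) by (rewrite Hxx; apply sqrt_INR_sqr).
    rewrite <- Hxx, <- (sqrt_INR_sqr (S (S (S m)))). fold y.
    apply comparison_step_upper; [exact e_ge0 | exact Hx | exact Hy | exact Hxy]. }
  pose proof (hprod_ge1 m). pose proof (hprod_ge1 (S m)).
  assert (hfast m * D * hprod (S m) <= hfast (S m) * (D - 1) * hprod (S m))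
    by (apply Rmult_le_compat_r; lra).
  assert (hfast (S m) * ((D - 1) * hprod (S m)) <= hfast (S m) * (D * hprod m))
    by (apply Rmult_le_compat_l; lra).
  apply (Rmult_le_reg_r D); [lra|]. nra.
Qed.

Lemma hprod_lower : exists c M, 0 < c /\ forall m, (M <= m)%nat -> c * INR (S (S m)) <= hprod m.
Proof.
  destruct (sqrt_INR_eventually_ge (2 * e + 1)) as [M HM].
  set (c := hprod M / hslow M).
  assert (Hc : 0 < c) by (apply Rdiv_lt_0_compat; [pose proof (hprod_ge1 M); lra | apply hslow_gt0]).
  exists c, M. split; [exact Hc|]. intros m Hm.
  assert (Hcm : c <= hprod m / hslow m).
  { apply (nondecreasing_from (fun m => hprod m / hslow m) M); [|exact Hm].
    intros k Hk. apply hprod_div_hslow_le_S, HM. lia. }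
  pose proof (hslow_gt0 m). pose proof (hslow_ge m).
  apply Rle_trans with (c * hslow m); [apply Rmult_le_compat_l; lra|].
  apply (Rmult_le_compat_r (hslow m)) in Hcm; [|lra].
  replace (hprod m / hslow m * hslow m) with (hprod m) in Hcm by (field; lra). exact Hcm.
Qed.

Lemma hprod_upper : exists C M, forall m, (M <= m)%nat -> hprod m <= C * INR (S (S m)).
Proof.
  destruct (sqrt_INR_eventually_ge (2 * e + 3)) as [M HM].
  set (C := hprod M / hfast M).
  assert (HC : 0 < C)
    by (apply Rdiv_lt_0_compat; [pose proof (hprod_ge1 M); lra | apply hfast_gt0, HM; lia]).
  exists C, M. intros m Hm.
  assert (Hcm : hprod m / hfast m <= C).
  { apply Ropp_le_cancel.
    apply (nondecreasing_from (fun m => - (hprod m / hfast m)) M); [|exact Hm].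
    intros k Hk. apply Ropp_le_contravar, hprod_div_hfast_le_S, HM. lia. }
  pose proof (hfast_gt0 m ltac:(apply HM; lia)). pose proof (hfast_le m).
  apply (Rmult_le_compat_r (hfast m)) in Hcm; [|lra].
  replace (hprod m / hfast m * hfast m) with (hprod m) in Hcm by (field; lra).
  eapply Rle_trans; [exact Hcm | apply Rmult_le_compat_l; lra].
Qed.

Lemma hsum_lower_sqrt :
  exists c M, 0 < c /\ forall n, (M <= n)%nat -> c * sqrt (INR (S n)) <= hsum n.
Proof.
  destruct hprod_lower as [c [M [Hc Hlow]]].
  exists (sqrt c), (S M). split; [now apply sqrt_lt_R0|].
  intros [|m] Hm; [lia|].
  assert (Hsq : c * INR (S (S m)) <= hsum (S m) * hsum (S m)).
  { eapply Rle_trans; [apply Hlow; lia|].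
    pose proof (hsum_le_S m). pose proof (hsum_ge1 m). unfold hprod. nra. }
  rewrite <- sqrt_mult by (lra || apply pos_INR).
  rewrite <- (sqrt_square (hsum (S m))) by (pose proof (hsum_ge1 (S m)); lra).
  now apply sqrt_le_1_alt.
Qed.

Lemma hsum_upper_sqrt : exists C M, forall n, (M <= n)%nat -> hsum n <= C * sqrt (INR (S n)).
Proof.
  destruct hprod_upper as [C [M Hup]].
  assert (HC : 0 <= C).
  { pose proof (Hup M (le_n M)). pose proof (hprod_ge1 M).
    pose proof (lt_0_INR (S (S M)) ltac:(lia)). nra. }
  exists (sqrt (2 * C)), M. intros n Hn.
  assert (Hsq : hsum n * hsum n <= 2 * C * INR (S n)).
  { pose proof (Hup n Hn) as Hn'. rewrite (S_INR (S n)) in Hn'. unfold hprod in Hn'.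
    pose proof (hsum_le_S n). pose proof (hsum_ge1 n).
    assert (1 <= INR (S n)) by (apply (le_INR 1); lia).
    assert (hsum n * hsum n <= hsum n * hsum (S n)) by (apply Rmult_le_compat_l; lra).
    nra. }
  rewrite <- sqrt_mult by (lra || apply pos_INR).
  rewrite <- (sqrt_square (hsum n)) by (pose proof (hsum_ge1 n); lra).
  now apply sqrt_le_1_alt.
Qed.

Lemma hpair_lower :
  exists c M, 0 < c /\ forall n, (M <= n)%nat -> c / sqrt (INR (S n)) <= hpair n.
Proof.
  destruct hsum_lower_sqrt as [c [M [Hc Hlow]]].
  pose proof e_ge0 as He.
  exists (c / (1 + e)), M. split; [apply Rdiv_lt_0_compat; lra|].
  intros n Hn.
  destruct (hsum_between n) as [_ Hle]. pose proof (Hlow n Hn) as Hge.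
  pose proof (hpair_ge0 n). pose proof (sqrt_INR_sqr (S n)) as Hxx.
  set (x := sqrt (INR (S n))) in *.
  assert (Hx : 1 <= x) by (rewrite <- sqrt_1; apply sqrt_le_1_alt, (le_INR 1); lia).
  assert (c <= (1 + e) * x * hpair n).
  { apply (Rmult_le_reg_r x); [lra|]. rewrite <- Hxx in Hle.
    assert (0 <= e * hpair n * x * (x - 1))
      by (apply Rmult_le_pos; [apply Rmult_le_pos; [apply Rmult_le_pos|]|]; lra).
    nra. }
  apply (Rmult_le_reg_r ((1 + e) * x)); [nra|].
  replace (c / (1 + e) / x * ((1 + e) * x)) with c by (field; lra). lra.
Qed.

Lemma hweight_upper : exists C M, forall n, (M <= n)%nat -> hweight (S n) <= C / sqrt (INR (S n)).
Proof.
  destruct hsum_upper_sqrt as [C [M1 Hup]].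
  destruct (sqrt_INR_eventually_ge (2 * e)) as [M2 Hbig].
  exists (2 * C), (Nat.max M1 M2). intros n Hn.
  destruct (hsum_between n) as [Hge _]. pose proof (Hup n ltac:(lia)) as Hle.
  pose proof (Hbig n ltac:(lia)) as Hx. pose proof (sqrt_INR_sqr (S n)) as Hxx.
  assert (Hx1 : 1 <= sqrt (INR (S n))) by (rewrite <- sqrt_1; apply sqrt_le_1_alt, (le_INR 1); lia).
  set (x := sqrt (INR (S n))) in *. rewrite <- Hxx in Hge.
  assert (Hw : hweight (S n) <= hpair n) by (pose proof (hweight_ge0 n); unfold hpair; lra).
  pose proof (hweight_ge0 (S n)). pose proof (hpair_ge0 n).
  (* Once [x >= 2 e], the lower bound in [hsum_between] is at least [x^2 (hpair n) / 2]. *)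
  assert (x * hpair n <= 2 * C).
  { apply (Rmult_le_reg_r x); [lra|].
    assert (0 <= hpair n * x * (x - 2 * e)) by (apply Rmult_le_pos; [apply Rmult_le_pos|]; lra).
    nra. }
  apply (Rmult_le_reg_r x); [lra|]. replace (2 * C / x * x) with (2 * C) by (field; lra). nra.
Qed.

End HermiteWeights.

Lemma div_sqrt_le_div_Rpower a N N' gamma : 0 <= a -> 1 <= N <= N' -> gamma <= 1 / 2 ->
  a / sqrt N' <= a / Rpower N gamma.
Proof.
  intros Ha HN Hg. unfold Rdiv. apply Rmult_le_compat_l; [exact Ha|].
  apply Rinv_le_contravar; [apply exp_pos|].
  rewrite <- Rpower_sqrt by lra.
  eapply Rle_trans; [apply Rle_Rpower; [lra | exact Hg]|].
  replace (1 / 2) with (/ 2) by field. apply Rle_Rpower_l; lra.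
Qed.

Lemma hermite_series_term u gamma n :
  hermite (S n) u ^ 2 / (INR (fact (S n)) * Rpower (INR (S n)) gamma)
  = hweight u (S n) / Rpower (INR (S n)) gamma.
Proof.
  unfold hweight. pose proof (INR_fact_pos (S n)). pose proof (exp_pos (gamma * ln (INR (S n)))).
  unfold Rpower. field. lra.
Qed.

Lemma ex_series_hweight_div_Rpower u gamma : 1 / 2 < gamma ->
  ex_series (fun n => hweight u (S n) / Rpower (INR (S n)) gamma).
Proof.
  intro Hg. destruct (hweight_upper u) as [C [M HC]].
  apply (ex_series_eventually_le _ (fun n => C * Rpower (INR (S n)) (- (/ 2 + gamma))) M).
  - intros n Hn. set (N := INR (S n)).
    assert (HN : 0 < N) by (apply lt_0_INR; lia).
    pose proof (exp_pos (gamma * ln N)) as Hpow. fold (Rpower N gamma) in Hpow.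
    rewrite Rabs_pos_eq by (apply Rdiv_le_0_compat; [apply hweight_ge0 | exact Hpow]).
    rewrite Rpower_Ropp, Rpower_plus, Rpower_sqrt by exact HN.
    replace (C * / (sqrt N * Rpower N gamma)) with (C / sqrt N / Rpower N gamma)
      by (field; split; [lra | apply Rgt_not_eq, sqrt_lt_R0, HN]).
    unfold Rdiv at 1 3. apply Rmult_le_compat_r; [left; apply Rinv_0_lt_compat, Hpow | apply HC, Hn].
  - apply (ex_series_scal_l C (fun n => Rpower (INR (S n)) (- (/ 2 + gamma)))).
    apply ex_series_Rpower_opp. lra.
Qed.

(* Consecutive terms sum to at least [c / (n + 2)] by [hpair_lower]. *)
Lemma not_ex_series_hweight_div_Rpower u gamma : gamma <= 1 / 2 ->
  ~ ex_series (fun n => hweight u (S n) / Rpower (INR (S n)) gamma).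
Proof.
  intros Hg Hex. set (t n := hweight u (S n) / Rpower (INR (S n)) gamma) in Hex.
  destruct (hpair_lower u) as [c [M [Hc Hpair]]].
  apply (not_ex_series_harmonic_minorant (c / 2) (fun n => t n + t (S n)) M); [lra| |].
  - intros n Hn. set (N := INR (S (S n))).
    assert (HN : 1 <= INR (S n) <= N) by (split; [apply (le_INR 1) | apply le_INR]; lia).
    assert (Hsq : sqrt N * sqrt N = N) by apply sqrt_INR_sqr.
    assert (Hsqrt : 0 < sqrt N) by (apply sqrt_lt_R0; lra).
    assert (Hlow : c / N <= hpair u (S n) / sqrt N).
    { pose proof (Hpair (S n) ltac:(lia)) as Hp. fold N in Hp.
      replace (c / N) with (c / sqrt N / sqrt N)
        by (unfold Rdiv; rewrite Rmult_assoc, <- Rinv_mult, Hsq; reflexivity).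
      unfold Rdiv at 1 3. apply Rmult_le_compat_r; [left; apply Rinv_0_lt_compat, Hsqrt | exact Hp]. }
    assert (hpair u (S n) / sqrt N <= t n + t (S n)).
    { unfold hpair, Rdiv. rewrite Rmult_plus_distr_r. apply Rplus_le_compat.
      - apply div_sqrt_le_div_Rpower; [apply hweight_ge0 | exact HN | exact Hg].
      - assert (HN1 : 1 <= N) by lra.
        apply div_sqrt_le_div_Rpower;
          [apply hweight_ge0 | split; [exact HN1 | apply Rle_refl] | exact Hg]. }
    assert (c / 2 / INR (S n) <= c / N).
    { unfold N. rewrite (S_INR (S n)). unfold Rdiv. rewrite Rmult_assoc, <- Rinv_mult.
      apply Rmult_le_compat_l; [lra|]. apply Rinv_le_contravar; lra. }
    lra.
  - apply (ex_series_plus t (fun n => t (S n))); [exact Hex|].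
    exact (proj1 (ex_series_incr_1 t) Hex).
Qed.

Theorem mainTheorem8 (u gamma : R) :
  ex_series (fun n : nat =>
    (hermite (S n) u) ^ 2 / (INR (Factorial.fact (S n)) * Rpower (INR (S n)) gamma))
  <-> 1 / 2 < gamma.
Proof.
  split.
  - intro Hex. destruct (Rlt_or_le (1 / 2) gamma) as [Hg | Hg]; [exact Hg|].
    exfalso. apply (not_ex_series_hweight_div_Rpower u gamma Hg).
    eapply ex_series_ext; [apply hermite_series_term | exact Hex].
  - intro Hg. eapply ex_series_ext; [intro n; symmetry; apply hermite_series_term|].
    now apply ex_series_hweight_div_Rpower.
Qed.
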